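(* Let $G$ be a finite abstract simplicial complex. Then $$\sum_{x \in G} w(x)\, w(S(x)) = 0.$$
   Context: A finite abstract simplicial complex $G$ is a finite set of non-empty finite sets such that every non-empty subset of an element of $G$ is again in $G$. For $x\in G$, $w(x)=(-1)^{|x|-1}$, and for $A\subset G$, $w(A)=\sum_{y\in A}w(y)$. $G$ carries the finite topology whose basis consists of the stars $U(x)=\{y\in G : x\subset y\}$. The unit ball $B(x)$ is the closure of $U(x)$, i.e. $B(x)=\{y\in G : y\subset z \text{ for some } z\in G \text{ with } x\subset z\}$, and the unit sphere is $S(x)=B(x)\setminus U(x)$. *)

From mathcomp Require Import all_boot all_algebra.
Set Implicit Arguments. Unset Strict Implicit. Unset Printing Implicit Defensive.
Import GRing.Theory.
Local Open Scope ring_scope.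

Definition is_complex (T : finType) (G : {set {set T}}) : Prop :=
  set0 \notin G /\
  (forall x y : {set T}, x \in G -> y \subset x -> y != set0 -> y \in G).

Definition w (T : finType) (x : {set T}) : int := (-1) ^+ (#|x|.-1).

Definition wA (T : finType) (A : {set {set T}}) : int := \sum_(y in A) w y.

Definition Ustar (T : finType) (G : {set {set T}}) (x : {set T}) : {set {set T}} :=
  [set y in G | x \subset y].

(* unit ball B(x) = closure of U(x) = {y in G | y ⊆ z for some z in G with x ⊆ z} *)
Definition Bball (T : finType) (G : {set {set T}}) (x : {set T}) : {set {set T}} :=
  [set y in G | [exists z in G, (x \subset z) && (y \subset z)]].

Definition Ssphere (T : finType) (G : {set {set T}}) (x : {set T}) : {set {set T}} :=
  Bball G x :\: Ustar G x.

From mathcomp Require Import all_boot all_algebra.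
Set Implicit Arguments. Unset Strict Implicit. Unset Printing Implicit Defensive.
Import GRing.Theory Num.Theory.
Local Open Scope ring_scope.

(* In a complex, y lies in the unit ball of x iff x :|: y is a face, so
   w(S(x)) = w{y | x :|: y in G} - w(U(x)).  Summed against w(x), both terms
   give w(G): the second because every face z has sum 1 over its non-empty
   subsets (a simplex has Euler characteristic 1), the first because, for
   fixed non-empty faces x and z, the signed count of the non-empty y with
   x :|: y = z is 1 if x = z and 0 otherwise.  Both counts are alternating
   sums killed by the sign-reversing involution that toggles one vertex. *)

Section AlternatingSubsetSums.

Variable T : finType.
Implicit Types (a b : T) (t x y z : {set T}).

Definition toggle a t := if a \in t then t :\ a else a |: t.

Definition card_sign t : int := (-1) ^+ #|t|.

Lemma in_toggle a b t :
  (b \in toggle a t) = if b == a then a \notin t else b \in t.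
Proof.
rewrite /toggle; case: ifP => at_; rewrite !inE;
  case: (eqVneq b a) => [->|] //=; rewrite at_.
Qed.

Lemma toggleK a : involutive (toggle a).
Proof.
move=> t; apply/setP => b; rewrite !in_toggle eqxx.
by case: (eqVneq b a) => [->|]; rewrite ?negbK.
Qed.

Lemma card_sign_toggle a t : card_sign (toggle a t) = - card_sign t.
Proof.
rewrite /card_sign /toggle; case: ifP => at_.
  by rewrite (cardsD1 a t) at_ exprS mulN1r opprK.
by rewrite cardsU1 at_ exprS mulN1r.
Qed.

Lemma sum_card_sign_toggle_closed a (P : pred {set T}) :
  (forall t, P (toggle a t) = P t) -> \sum_(t | P t) card_sign t = 0.
Proof.
move=> Ptoggle; apply/eqP; rewrite -eqNr -sumrN.
rewrite (reindex_inj (can_inj (toggleK a))) /=.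
apply/eqP; apply: eq_big => [t | t _]; first exact: Ptoggle.
by rewrite card_sign_toggle opprK.
Qed.

Lemma w_card_sign t : t != set0 -> w t = - card_sign t.
Proof.
rewrite -card_gt0 /w /card_sign; case: #|t| => // n _.
by rewrite exprS mulN1r opprK.
Qed.

Lemma toggle_subset a t z : a \in z -> (toggle a t \subset z) = (t \subset z).
Proof.
move=> az; apply/subsetP/subsetP => tz b.
  move=> bt; case: (eqVneq b a) => [-> // | ba].
  by apply: tz; rewrite in_toggle (negPf ba).
by rewrite in_toggle; case: (eqVneq b a) => [-> // | _]; apply: tz.
Qed.

Lemma setU_toggle a x t : a \in x -> x :|: toggle a t = x :|: t.
Proof.
move=> ax; apply/setP => b; rewrite !inE in_toggle.
by case: (eqVneq b a) => [->|]; rewrite ?ax.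
Qed.

Lemma sum_w_nonempty_subsets z :
  z != set0 -> \sum_(y : {set T} | (y \subset z) && (y != set0)) w y = 1.
Proof.
case/set0Pn => a az.
have := @sum_card_sign_toggle_closed a (fun y : {set T} => y \subset z)
  (fun t => toggle_subset t az).
rewrite (bigD1 set0) ?sub0set //= {1}/card_sign cards0 expr0 => sum0.
rewrite (eq_bigr (fun y => - card_sign y)) => [|y /andP[_ y0]]; last exact: w_card_sign.
by apply/eqP; rewrite sumrN eq_sym -addr_eq0 sum0.
Qed.

Lemma sum_w_setU_eq x z : x != set0 ->
  \sum_(y : {set T} | (y != set0) && (x :|: y == z)) w y = (x == z)%:R.
Proof.
move=> x0; case: (eqVneq x z) => [<- | xz].
  rewrite -(sum_w_nonempty_subsets x0); apply: eq_bigl => y.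
  by rewrite andbC eq_sym eqEsubset subsetUl subUset subxx.
rewrite (eq_bigr (fun y => - card_sign y)) => [|y /andP[y0 _]]; last first.
  exact: w_card_sign.
rewrite sumrN (eq_bigl (fun y => x :|: y == z)) => [|y]; last first.
  by case: (eqVneq y set0) => [->|] //=; rewrite setU0 (negPf xz).
case/set0Pn: x0 => a ax.
by rewrite (sum_card_sign_toggle_closed (a := a)) ?oppr0 // => t; rewrite setU_toggle.
Qed.

End AlternatingSubsetSums.

Section SimplicialComplex.

Variables (T : finType) (G : {set {set T}}).
Hypothesis HG : is_complex G.
Implicit Types x y z : {set T}.

Lemma face_neq0 x : x \in G -> x != set0.
Proof. by case: HG => G0 _ xG; apply: contraNneq G0 => <-. Qed.

Lemma face_subset x y : x \in G -> y \subset x -> y != set0 -> y \in G.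
Proof. by case: HG => _; apply. Qed.

Lemma common_coface x y : x \in G ->
  [exists z in G, (x \subset z) && (y \subset z)] = (x :|: y \in G).
Proof.
move=> xG; apply/existsP/idP => [[z /and3P[zG xz yz]] | xyG].
  apply: (face_subset zG); first by rewrite subUset xz.
  by rewrite setU_eq0 negb_and face_neq0.
by exists (x :|: y); rewrite xyG subsetUl subsetUr.
Qed.

Lemma sum_w_faces z : z \in G -> \sum_(x in G | x \subset z) w x = 1.
Proof.
move=> zG; rewrite -(sum_w_nonempty_subsets (face_neq0 zG)); apply: eq_bigl => x.
apply/andP/andP => [[xG xz] | [xz x0]]; split=> //; first exact: face_neq0.
exact: face_subset zG xz x0.
Qed.

Lemma sum_w_setU_face x z : x \in G -> z \in G ->
  \sum_(y in G | x :|: y == z) w y = (x == z)%:R.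
Proof.
move=> xG zG; rewrite -(sum_w_setU_eq z (face_neq0 xG)); apply: eq_bigl => y.
apply/andP/andP => [[yG xyz] | [y0 xyz]]; split=> //; first exact: face_neq0.
by apply: face_subset zG _ y0; rewrite -(eqP xyz) subsetUr.
Qed.

Lemma wA_Ssphere x : x \in G ->
  wA (Ssphere G x) = \sum_(y in G | x :|: y \in G) w y - \sum_(y in G | x \subset y) w y.
Proof.
move=> xG; rewrite (bigID (fun y => x \subset y) (fun y => (y \in G) && (x :|: y \in G))) /=.
have -> : \sum_(y | (y \in G) && (x :|: y \in G) && (x \subset y)) w y =
          \sum_(y in G | x \subset y) w y.
  apply: eq_bigl => y.
  by case: (boolP (x \subset y)) => [/setUidPr -> | _]; rewrite ?andbb ?andbF.
rewrite addrC addrK; apply: eq_bigl => y.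
by rewrite !inE common_coface //; case: (y \in G) => //=; rewrite andbC.
Qed.

Lemma sum_w_star : \sum_(x in G) w x * \sum_(y in G | x \subset y) w y = wA G.
Proof.
under eq_bigr do rewrite mulr_sumr.
rewrite (exchange_big_dep (mem G)) => [|x y _ /andP[] //] /=.
apply: eq_bigr => z zG; rewrite -mulr_suml -[RHS]mul1r -(sum_w_faces zG).
by congr (_ * _); apply: eq_bigl => x; rewrite zG.
Qed.

Lemma sum_w_join : \sum_(x in G) w x * \sum_(y in G | x :|: y \in G) w y = wA G.
Proof.
have partition_by_join x : \sum_(y in G | x :|: y \in G) w y =
    \sum_(z in G) \sum_(y in G | x :|: y == z) w y.
  rewrite (partition_big (fun y => x :|: y) (mem G)) => [|y /andP[] //] /=.
  apply: eq_bigr => z zG; apply: eq_bigl => y.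
  by case: (eqVneq (x :|: y) z) => [-> | _]; rewrite ?zG ?andbT ?andbF.
under eq_bigr do rewrite partition_by_join mulr_sumr.
rewrite exchange_big /=; apply: eq_bigr => z zG.
under eq_bigr => x xG do rewrite sum_w_setU_face //.
rewrite (bigD1 z) //= eqxx mulr1 big1 ?addr0 // => x /andP[_ /negPf ->].
exact: mulr0.
Qed.

End SimplicialComplex.

Theorem mainTheorem4 (T : finType) (G : {set {set T}}) (HG : is_complex G) :
  \sum_(x in G) w x * wA (Ssphere G x) = 0.
Proof.
under eq_bigr => x xG do rewrite (wA_Ssphere HG xG) mulrBr.
by rewrite sumrB (sum_w_join HG) (sum_w_star HG) subrr.
Qed.
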